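(* Let $U\in C([0,1])\cap C^1((0,1])\cap C^2((0,1))$ satisfy $U''>0$ on $(0,1)$, $\lim_{h\downarrow0}U'(h)=-\infty$, $r\mapsto rU''(r)$ non-decreasing on $(0,1)$, and $U(0)=U(1)=0$. Then for all $r,s,t\in[0,1]$ and $r_0\in(0,1]$, \[U((1-t)r+ts)\ge(1-t)U(r)+tU(s)+rU(1-t)+sU(t),\] \[d_U((1-t)r+ts,r_0)\ge(1-t)d_U(r,r_0)+td_U(s,r_0)+rU(1-t)+sU(t).\]
   Context: $d_U(r,r_0)=U(r)-U(r_0)-(r-r_0)U'(r_0)$ for $r\in[0,1]$, $r_0\in(0,1]$. *)

From Stdlib Require Import Reals.
From Coquelicot Require Import Coquelicot.
Open Scope R_scope.

(* Bregman-type divergence d_U(r,r0) = U(r) - U(r0) - (r - r0) U'(r0),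
   where dU plays the role of U'. *)
Definition d_U (U dU : R -> R) (r r0 : R) : R :=
  U r - U r0 - (r - r0) * dU r0.

(* With m = (1 - t) r + t s, convexity of U and U(0) = 0 make U superadditive,
   so U(m) >= U((1 - t) r) + U(t s).  Each term is then bounded by the scaling
   inequality U(l r) >= l U(r) + r U(l): for fixed l in (0,1) the difference
   psi(r) = l U(r) + r U(l) - U(l r) vanishes at r = 0 and r = 1 and is convex,
   since psi''(r) = l (U''(r) - l U''(l r)) >= 0 is the monotonicity of r U''(r)
   between l r and r.  The inequality for d_U follows because d_U(., r0) differs
   from U by an affine function. *)

From Stdlib Require Import Reals Lra.
From Coquelicot Require Import Coquelicot.
Open Scope R_scope.

Lemma MVT_is_derive (f df : R -> R) a b : a < b ->
  (forall c, a < c < b -> is_derive f c (df c)) ->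
  (forall c, a <= c <= b -> continuity_pt f c) ->
  exists c, a < c < b /\ f b - f a = df c * (b - a).
Proof.
  intros Hab Hd Hc.
  assert (Hf : forall c, a < c < b -> derivable_pt f c).
  { intros c Hc'. exists (df c). apply is_derive_Reals, Hd; exact Hc'. }
  destruct (MVT f id a b Hf (fun c _ => derivable_pt_id c) Hab Hc
              (fun c _ => derivable_continuous_pt _ _ (derivable_pt_id c)))
    as [c [Hc' E]].
  exists c; split; [exact Hc'|].
  rewrite (derive_pt_eq_0 f c (df c) (Hf c Hc')) in E
    by (apply is_derive_Reals, Hd; exact Hc').
  rewrite (derive_pt_eq_0 id c 1 (derivable_pt_id c)) in E
    by apply derivable_pt_lim_id.
  unfold id in E. lra.
Qed.

Lemma is_derive_nonneg_incr (g dg : R -> R) a b :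
  (forall y, a < y < b -> is_derive g y (dg y)) ->
  (forall y, a < y < b -> 0 <= dg y) ->
  forall x y, a < x -> x <= y -> y < b -> g x <= g y.
Proof.
  intros Hd Hp x y Hx Hxy Hy.
  destruct (Rle_lt_or_eq_dec x y Hxy) as [Hlt| ->]; [|lra].
  destruct (MVT_is_derive g dg x y Hlt) as [c [Hc E]].
  - intros c Hc; apply Hd; lra.
  - intros c Hc. apply continuity_pt_filterlim.
    apply (ex_derive_continuous g). exists (dg c); apply Hd; lra.
  - assert (0 <= dg c) by (apply Hp; lra). nra.
Qed.

Lemma convex_chord_le (f df d2f : R -> R) a b x :
  (forall y, a <= y <= b -> continuity_pt f y) ->
  (forall y, a < y < b -> is_derive f y (df y)) ->
  (forall y, a < y < b -> is_derive df y (d2f y)) ->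
  (forall y, a < y < b -> 0 <= d2f y) ->
  a <= x <= b -> (b - a) * f x <= (b - x) * f a + (x - a) * f b.
Proof.
  intros Hc Hd Hd2 Hp Hx.
  destruct (Req_dec x a) as [-> | Ha]; [lra|].
  destruct (Req_dec x b) as [-> | Hb]; [lra|].
  destruct (MVT_is_derive f df a x) as [c1 [Hc1 E1]]; try lra.
  { intros; apply Hd; lra. } { intros; apply Hc; lra. }
  destruct (MVT_is_derive f df x b) as [c2 [Hc2 E2]]; try lra.
  { intros; apply Hd; lra. } { intros; apply Hc; lra. }
  assert (df c1 <= df c2)
    by (apply (is_derive_nonneg_incr df d2f a b); auto; lra).
  assert ((b - x) * (f x - f a) <= (x - a) * (f b - f x)).
  { rewrite E1, E2. replace ((x - a) * (df c2 * (b - x)))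
      with ((b - x) * (x - a) * df c2) by ring.
    replace ((b - x) * (df c1 * (x - a))) with ((b - x) * (x - a) * df c1) by ring.
    apply Rmult_le_compat_l; nra. }
  lra.
Qed.

Lemma superadditive_of_convex (f df d2f : R -> R) c :
  (forall y, 0 <= y <= c -> continuity_pt f y) ->
  (forall y, 0 < y < c -> is_derive f y (df y)) ->
  (forall y, 0 < y < c -> is_derive df y (d2f y)) ->
  (forall y, 0 < y < c -> 0 <= d2f y) ->
  f 0 = 0 ->
  forall a b, 0 <= a -> 0 <= b -> a + b <= c -> f a + f b <= f (a + b).
Proof.
  intros Hc Hd Hd2 Hp Hf0 a b Ha Hb Hab.
  destruct (Req_dec (a + b) 0) as [E|E].
  { replace a with 0 by lra. replace b with 0 by lra. rewrite Rplus_0_r, Hf0. lra. }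
  assert (Hstar : forall x, 0 <= x <= a + b -> (a + b) * f x <= x * f (a + b)).
  { intros x Hx.
    pose proof (convex_chord_le f df d2f 0 (a + b) x) as C.
    rewrite Hf0 in C.
    enough ((a + b - 0) * f x <= (a + b - x) * 0 + (x - 0) * f (a + b)) by lra.
    apply C; auto; intros; [apply Hc | apply Hd | apply Hd2 | apply Hp]; lra. }
  pose proof (Hstar a ltac:(lra)). pose proof (Hstar b ltac:(lra)).
  apply Rmult_le_reg_l with (a + b); lra.
Qed.

Definition clamp01 (y : R) : R := Rmax 0 (Rmin 1 y).

Lemma clamp01_in y : 0 <= clamp01 y <= 1.
Proof. unfold clamp01, Rmax, Rmin; repeat destruct Rle_dec; lra. Qed.

Lemma clamp01_id y : 0 <= y <= 1 -> clamp01 y = y.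
Proof. intros; unfold clamp01, Rmax, Rmin; repeat destruct Rle_dec; lra. Qed.

Lemma clamp01_dist x y : Rabs (clamp01 y - clamp01 x) <= Rabs (y - x).
Proof.
  unfold clamp01, Rmax, Rmin, Rabs; repeat destruct Rle_dec; repeat destruct Rcase_abs; lra.
Qed.

Lemma continuity_pt_clamp01 (f : R -> R) :
  (forall x, 0 <= x <= 1 ->
     filterlim f (within (fun y => 0 <= y <= 1) (locally x)) (locally (f x))) ->
  forall x, continuity_pt (fun y => f (clamp01 y)) x.
Proof.
  intros Hf x. apply continuity_pt_filterlim.
  apply (filterlim_comp _ _ _ clamp01 f _ (within (fun y => 0 <= y <= 1) (locally (clamp01 x)))).
  - intros A [eps HA]. exists eps. intros y Hy. apply HA; [|apply clamp01_in].
    apply Rle_lt_trans with (1 := clamp01_dist x y). exact Hy.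
  - apply Hf, clamp01_in.
Qed.

Lemma is_derive_clamp01 (f : R -> R) x l :
  0 < x < 1 -> is_derive f x l -> is_derive (fun y => f (clamp01 y)) x l.
Proof.
  intros Hx. apply is_derive_ext_loc.
  assert (Hrad : 0 < Rmin x (1 - x)) by (apply Rmin_pos; lra).
  exists (mkposreal _ Hrad). intros y Hy.
  change (Rabs (y - x) < Rmin x (1 - x)) in Hy. apply Rabs_def2 in Hy.
  pose proof (Rmin_l x (1 - x)). pose proof (Rmin_r x (1 - x)).
  rewrite clamp01_id; [reflexivity | lra].
Qed.

Section ConvexProfile.

Variables U dU d2U : R -> R.
Hypothesis HUc : forall x, 0 <= x <= 1 ->
  filterlim U (within (fun y => 0 <= y <= 1) (locally x)) (locally (U x)).
Hypothesis HdU : forall x, 0 < x < 1 -> is_derive U x (dU x).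
Hypothesis Hd2U : forall x, 0 < x < 1 -> is_derive dU x (d2U x).
Hypothesis Hd2U_ge0 : forall x, 0 < x < 1 -> 0 <= d2U x.
Hypothesis Hmon : forall x y, 0 < x < 1 -> 0 < y < 1 -> x <= y -> x * d2U x <= y * d2U y.
Hypothesis HU0 : U 0 = 0.
Hypothesis HU1 : U 1 = 0.

(* Stdlib's mean value theorem asks for two-sided continuity at the endpoints,
   so we work with the extension of U that is constant outside [0,1]. *)
Let Uc (y : R) : R := U (clamp01 y).

Let Uc_derive x : 0 < x < 1 -> is_derive Uc x (dU x).
Proof. intros Hx. apply is_derive_clamp01, HdU; exact Hx. Qed.

Lemma U_superadditive a b : 0 <= a -> 0 <= b -> a + b <= 1 -> U a + U b <= U (a + b).
Proof.
  intros Ha Hb Hab.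
  assert (Uc0 : Uc 0 = 0) by (unfold Uc; rewrite clamp01_id, HU0; lra).
  pose proof (superadditive_of_convex Uc dU d2U 1
    (fun y _ => continuity_pt_clamp01 U HUc y) Uc_derive Hd2U Hd2U_ge0 Uc0 a b Ha Hb Hab) as S.
  unfold Uc in S. rewrite !clamp01_id in S by lra. exact S.
Qed.

Lemma U_scale_ge lam r : 0 <= lam <= 1 -> 0 <= r <= 1 ->
  lam * U r + r * U lam <= U (lam * r).
Proof.
  intros Hl Hr.
  destruct (Req_dec lam 0) as [-> | L0].
  { rewrite !Rmult_0_l, HU0. lra. }
  destruct (Req_dec lam 1) as [-> | L1].
  { rewrite !Rmult_1_l, HU1. lra. }
  set (psi y := lam * Uc y + y * U lam - Uc (lam * y)).
  set (dpsi y := lam * dU y + U lam - lam * dU (lam * y)).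
  set (d2psi y := lam * d2U y - lam * (lam * d2U (lam * y))).
  assert (Hpsi_c : forall y, continuity_pt psi y).
  { intros y. unfold psi.
    pose proof (continuity_pt_clamp01 U HUc) as Cc. fold Uc in Cc.
    apply continuity_pt_minus; [apply continuity_pt_plus|].
    - apply continuity_pt_scal, Cc.
    - apply continuity_pt_mult; [apply continuity_pt_id | apply continuity_pt_const; now intros ? ?].
    - apply (continuity_pt_comp (fun y => lam * y) Uc); [|apply Cc].
      apply continuity_pt_scal, continuity_pt_id. }
  assert (Hpsi_d : forall y, 0 < y < 1 -> is_derive psi y (dpsi y)).
  { intros y Hy.
    pose proof (Uc_derive y Hy) as D1. pose proof (Uc_derive (lam * y) ltac:(nra)) as D2.
    unfold psi, dpsi. auto_derive; change (fun x => Uc x) with Uc.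
    - repeat split; eexists; eassumption.
    - rewrite (is_derive_unique _ _ _ D1), (is_derive_unique _ _ _ D2). ring. }
  assert (Hpsi_d2 : forall y, 0 < y < 1 -> is_derive dpsi y (d2psi y)).
  { intros y Hy.
    pose proof (Hd2U y Hy) as D1. pose proof (Hd2U (lam * y) ltac:(nra)) as D2.
    unfold dpsi, d2psi. auto_derive; change (fun x => dU x) with dU.
    - repeat split; eexists; eassumption.
    - rewrite (is_derive_unique _ _ _ D1), (is_derive_unique _ _ _ D2). ring. }
  assert (Hpsi_cvx : forall y, 0 < y < 1 -> 0 <= d2psi y).
  { intros y Hy. unfold d2psi.
    pose proof (Hmon (lam * y) y ltac:(nra) Hy ltac:(nra)).
    apply Rmult_le_reg_l with y; nra. }
  assert (psi0 : psi 0 = 0).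
  { unfold psi, Uc. rewrite Rmult_0_r, clamp01_id, HU0; lra. }
  assert (psi1 : psi 1 = 0).
  { unfold psi, Uc. rewrite Rmult_1_r, !clamp01_id, HU1; lra. }
  pose proof (convex_chord_le psi dpsi d2psi 0 1 r
    (fun y _ => Hpsi_c y) Hpsi_d Hpsi_d2 Hpsi_cvx Hr) as C.
  rewrite psi0, psi1 in C. unfold psi, Uc in C.
  rewrite !clamp01_id in C by nra. lra.
Qed.

Lemma U_mix_ge r s t : 0 <= r <= 1 -> 0 <= s <= 1 -> 0 <= t <= 1 ->
  (1 - t) * U r + t * U s + r * U (1 - t) + s * U t <= U ((1 - t) * r + t * s).
Proof.
  intros Hr Hs Ht.
  pose proof (U_superadditive ((1 - t) * r) (t * s) ltac:(nra) ltac:(nra) ltac:(nra)).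
  pose proof (U_scale_ge (1 - t) r ltac:(lra) Hr).
  pose proof (U_scale_ge t s Ht Hs).
  lra.
Qed.

End ConvexProfile.

Lemma d_U_mix_gap (U dU : R -> R) r s t r0 :
  d_U U dU ((1 - t) * r + t * s) r0 - ((1 - t) * d_U U dU r r0 + t * d_U U dU s r0)
  = U ((1 - t) * r + t * s) - ((1 - t) * U r + t * U s).
Proof. unfold d_U; ring. Qed.

Theorem lemma3p2 (U dU d2U : R -> R)
  (* U in C([0,1]) *)
  (HUc : forall x, 0 <= x <= 1 ->
     filterlim U (within (fun y => 0 <= y <= 1) (locally x)) (locally (U x)))
  (* U in C^1((0,1]) : U' = dU on (0,1), left derivative dU 1 at 1,
     dU continuous on (0,1] *)
  (HdU : forall x, 0 < x < 1 -> is_derive U x (dU x))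
  (HdU1 : filterlim (fun h => (U h - U 1) / (h - 1)) (at_left 1) (locally (dU 1)))
  (HdUc : forall x, 0 < x <= 1 ->
     filterlim dU (within (fun y => 0 < y <= 1) (locally x)) (locally (dU x)))
  (* U in C^2((0,1)) : U'' = d2U on (0,1), continuous there *)
  (Hd2U : forall x, 0 < x < 1 -> is_derive dU x (d2U x))
  (Hd2Uc : forall x, 0 < x < 1 -> continuous d2U x)
  (* U'' > 0 on (0,1) *)
  (Hpos : forall x, 0 < x < 1 -> 0 < d2U x)
  (* lim_{h -> 0+} U'(h) = -oo *)
  (Hlim : filterlim dU (at_right 0) (Rbar_locally m_infty))
  (* r |-> r U''(r) non-decreasing on (0,1) *)
  (Hmon : forall x y, 0 < x < 1 -> 0 < y < 1 -> x <= y -> x * d2U x <= y * d2U y)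
  (HU0 : U 0 = 0) (HU1 : U 1 = 0) :
  forall r s t r0 : R,
    0 <= r <= 1 -> 0 <= s <= 1 -> 0 <= t <= 1 -> 0 < r0 <= 1 ->
    U ((1 - t) * r + t * s) >= (1 - t) * U r + t * U s + r * U (1 - t) + s * U t /\
    d_U U dU ((1 - t) * r + t * s) r0 >=
      (1 - t) * d_U U dU r r0 + t * d_U U dU s r0 + r * U (1 - t) + s * U t.
Proof.
  intros r s t r0 Hr Hs Ht _.
  pose proof (U_mix_ge U dU d2U HUc HdU Hd2U (fun x Hx => Rlt_le _ _ (Hpos x Hx))
                Hmon HU0 HU1 r s t Hr Hs Ht) as Hmix.
  pose proof (d_U_mix_gap U dU r s t r0) as Hgap.
  split; lra.
Qed.
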